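(* Let $p$ be a prime, $d\ge 2$ and $n\ge 2p-1$. Let $N_p(\le n,p^d)=p^{d(n+1)}$ be the number of polynomials $a_nx^n+\cdots+a_1x+a_0$ with all $a_k\in\{0,\dots,p^d-1\}$, and let $N_{pp}(\le n,p^d)$ be the number of those which are permutation polynomials modulo $p^d$. Then $$\frac{N_{pp}(\le n,p^d)}{N_p(\le n,p^d)}=\frac{(p-1)^p\,(p-1)!}{p^{2p-1}}.$$
   Context: An integer polynomial $f$ is a permutation polynomial modulo $M$ if the map $x\mapsto f(x)\bmod M$ is a bijection of $\{0,\dots,M-1\}$. *)

From mathcomp Require Import all_boot all_order all_algebra.
Set Implicit Arguments. Unset Strict Implicit. Unset Printing Implicit Defensive.

Definition coef_eval (n M : nat) (a : {ffun 'I_n.+1 -> 'I_M}) (x : nat) : nat :=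
  \sum_(k < n.+1) a k * x ^ k.

Definition is_perm_poly_mod (M : nat) (f : nat -> nat) : bool :=
  [forall y : 'I_M, #|[set x : 'I_M | f x %% M == y]| == 1].

Definition N_p (n M : nat) : nat := #|{ffun 'I_n.+1 -> 'I_M}|.

Definition N_pp (n M : nat) : nat :=
  #|[set a : {ffun 'I_n.+1 -> 'I_M} | is_perm_poly_mod M (coef_eval a)]|.

From HB Require Import structures.
From mathcomp Require Import all_boot all_order all_algebra.
From mathcomp Require Import separable zify.
Import GRing.Theory.
Set Implicit Arguments. Unset Strict Implicit. Unset Printing Implicit Defensive.

(* Taylor's formula f(x + h) = f(x) + h f'(x) mod h^2 shows, via Hensel lifting, that for
   d >= 2 a polynomial f permutes Z/p^d iff its reduction g permutes F_p and g' has no root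
   in F_p.  This only depends on the pair of value tables (g, g') in (F_p^F_p)^2, and
   the map from coefficient vectors in F_p^(n+1) to these pairs is linear.  It is onto
   when n + 1 >= 2p: a nonzero polynomial of degree < 2p cannot vanish together with its
   derivative on all of F_p, since it would be divisible by (X^p - X)^2.  So each of the
   p! (p-1)^p admissible pairs comes from p^(n+1-2p) vectors over F_p, each of which lifts
   to p^((d-1)(n+1)) coefficient vectors mod p^d. *)

Lemma mod_dvdW d m a b : d %| m -> a = b %[mod m] -> a = b %[mod d].
Proof. by move=> dm e; rewrite -(modn_dvdm a dm) e modn_dvdm. Qed.

Lemma expnD_taylor x h k : (x + h) ^ k = x ^ k + k * x ^ k.-1 * h %[mod h ^ 2].
Proof.
elim: k => [|k IH]; first by rewrite !expn0.
rewrite expnSr -modnMml IH modnMml.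
case: k {IH} => [|k]; first by rewrite expn0 expn1; congr (_ %% _); lia.
have -> : (x ^ k.+1 + k.+1 * x ^ k * h) * (x + h)
        = (k.+1 * x ^ k) * h ^ 2 + (x ^ k.+2 + k.+2 * x ^ k.+1 * h).
  by rewrite !expnS expn0; move: (x ^ k) => X; nia.
by rewrite modnMDl.
Qed.

Lemma card_preimset_uniform (I J : finType) (g : I -> J) (Q : {pred J}) c :
  (forall j, j \in Q -> #|[set i | g i == j]| = c) -> #|[set i | g i \in Q]| = #|Q| * c.
Proof.
move=> fibre_g; rewrite -sum1_card (partition_big g (mem Q)) => [|i]; last by rewrite inE.
rewrite -sum_nat_const; apply: eq_bigr => j Qj; rewrite -(fibre_g j Qj) -sum1_card.
apply: eq_bigl => i; rewrite !inE; case: (g i =P j) => [->|_]; last by rewrite andbF.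
by rewrite andbT; apply: Qj.
Qed.

Lemma card_residue_class M m r : m %| M -> r < m ->
  #|[set x : 'I_M | x %% m == r]| = M %/ m.
Proof.
move=> m_M r_lt; have m_gt0 : 0 < m by apply: leq_ltn_trans r_lt.
have h_lt (t : 'I_(M %/ m)) : r + m * t < M.
  by have := ltn_ord t; rewrite -{2}(divnK m_M); nia.
pose h t := Ordinal (h_lt t).
have h_inj : injective h.
  by move=> t1 t2 /(congr1 val) /= /addnI /eqP; rewrite eqn_pmul2l // => /eqP /val_inj.
rewrite -[RHS](card_ord (M %/ m)) -cardsT -(card_imset _ h_inj); apply: eq_card => x.
rewrite inE; apply/eqP/imsetP => [x_r | [t _ ->]].
  have t_lt : x %/ m < M %/ m by rewrite ltn_divLR // divnK.
  exists (Ordinal t_lt); rewrite ?inE //; apply: val_inj.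
  by rewrite /= {1}(divn_eq x m) x_r addnC mulnC.
by rewrite /= addnC mulnC modnMDl modn_small.
Qed.

Section PermutationModulo.

Variables (M : nat) (f : nat -> nat).
Hypothesis M_gt0 : 0 < M.
Hypothesis f_modn : forall x, f (x %% M) = f x %[mod M].

Let g (x : 'I_M) : 'I_M := Ordinal (ltn_pmod (f x) M_gt0).

Let is_perm_poly_mod_g : is_perm_poly_mod M f <-> injective g.
Proof.
split=> [/forallP perm_f x y gxy | inj_g].
  have /cards1P [z fiber_z] := perm_f (g x).
  have : x \in [set z : 'I_M | f z %% M == g x] by rewrite inE.
  have : y \in [set z : 'I_M | f z %% M == g x] by rewrite inE gxy.
  by rewrite fiber_z !inE => /eqP -> /eqP ->.
have [g' gK g'K] := injF_bij inj_g.
apply/forallP => y; apply/cards1P; exists (g' y); apply/setP => z; rewrite !inE.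
apply/eqP/eqP => [fz | ->]; last by have /(congr1 val) := g'K y.
by rewrite -(gK z); congr g'; apply: val_inj.
Qed.

Let g_modn x : val (g (Ordinal (ltn_pmod x M_gt0))) = f x %% M.
Proof. exact: f_modn. Qed.

Lemma is_perm_poly_mod_inj :
  is_perm_poly_mod M f <-> (forall x y, f x = f y %[mod M] -> x = y %[mod M]).
Proof.
rewrite is_perm_poly_mod_g; split=> [inj_g x y fxy | inj_f u v /(congr1 val) /= fuv].
  suff /(congr1 val) : Ordinal (ltn_pmod x M_gt0) = Ordinal (ltn_pmod y M_gt0) by [].
  by apply: inj_g; apply: val_inj; rewrite !g_modn.
by apply: val_inj; have := inj_f u v fuv; rewrite !modn_small.
Qed.

Lemma is_perm_poly_mod_surj :
  is_perm_poly_mod M f <-> (forall y, exists x, f x = y %[mod M]).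
Proof.
rewrite is_perm_poly_mod_g; split=> [inj_g y | surj_f].
  have [g' _ g'K] := injF_bij inj_g.
  exists (g' (Ordinal (ltn_pmod y M_gt0))).
  by have /(congr1 val) /= := g'K (Ordinal (ltn_pmod y M_gt0)).
have surj_g (y : 'I_M) : exists x, g x = y.
  have [x fxy] := surj_f y; exists (Ordinal (ltn_pmod x M_gt0)).
  by apply: val_inj; rewrite g_modn fxy modn_small.
have [g' g'K] := fin_all_exists surj_g.
exact: can_inj (canF_sym g'K).
Qed.

End PermutationModulo.

Lemma eqFp_nat p (m k : nat) : prime p ->
  ((m%:R : 'F_p) == k%:R)%R = (m == k %[mod p]).
Proof. by move=> p_pr; rewrite -val_eqE /= !val_Fp_nat. Qed.

Lemma eqmod_mul2r_prime p a b c : prime p -> ~~ (p %| c) ->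
  a * c = b * c %[mod p] -> a = b %[mod p].
Proof.
move=> p_pr p_c /eqP; rewrite -!eqFp_nat // !natrM => /eqP /mulIf abc.
by apply/eqP; rewrite -eqFp_nat // abc // -(dvdn_pcharf (pchar_Fp p_pr)).
Qed.

Section HenselLifting.

Variables (f Df : nat -> nat).
Hypothesis f_taylor : forall x h, f (x + h) = f x + h * Df x %[mod h ^ 2].

Lemma taylor_addn_mod m x t : f (x + m * t) = f x %[mod m].
Proof.
rewrite (mod_dvdW _ (f_taylor x (m * t))); last by rewrite dvdn_exp // dvdn_mulr.
by rewrite -mulnA addnC mulnC modnMDl.
Qed.

Lemma taylor_modn m x : f (x %% m) = f x %[mod m].
Proof. by rewrite {2}(divn_eq x m) addnC mulnC taylor_addn_mod. Qed.

Variable p : nat.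
Hypothesis p_prime : prime p.

Lemma hensel_inj_mod k : 0 < k ->
  (forall x y, f x = f y %[mod p] -> x = y %[mod p]) ->
  (forall x, ~~ (p %| Df x)) ->
  forall x y, f x = f y %[mod p ^ k] -> x = y %[mod p ^ k].
Proof.
have p_gt0 := prime_gt0 p_prime.
move=> + inj_p Df_p; elim: k => // -[_ _ | k IH _] x y fxy.
  by rewrite !expn1 in fxy *; exact: inj_p.
have pK_gt0 : 0 < p ^ k.+1 by rewrite expn_gt0 p_gt0.
have xy : x = y %[mod p ^ k.+1] by apply: IH => //; apply: mod_dvdW fxy; rewrite dvdn_exp2l.
(* With x = z + p^(k+1) s and y = z + p^(k+1) t, expanding f at z reduces the claim
   to s f'(z) = t f'(z) mod p. *)
set z := x %% p ^ k.+1.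
have xE : x = z + p ^ k.+1 * (x %/ p ^ k.+1) by rewrite /z addnC mulnC -divn_eq.
have yE : y = z + p ^ k.+1 * (y %/ p ^ k.+1) by rewrite /z xy addnC mulnC -divn_eq.
have taylor_z t : f (z + p ^ k.+1 * t) = f z + p ^ k.+1 * (t * Df z) %[mod p ^ k.+2].
  rewrite mulnA; apply: mod_dvdW (f_taylor z _).
  by rewrite expnMn -expnM dvdn_mulr // dvdn_exp2l //; lia.
move: fxy; rewrite xE yE !taylor_z => /eqP.
rewrite eqn_modDl (expnSr p k.+1) -!muln_modr //.
rewrite eqn_pmul2l // => /eqP /(eqmod_mul2r_prime p_prime (Df_p z)) st.
by rewrite -modnDmr -[RHS]modnDmr -!muln_modr st.
Qed.

Lemma is_perm_poly_mod_prime_pow d : 1 < d ->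
  is_perm_poly_mod (p ^ d) f <-> is_perm_poly_mod p f /\ forall x, ~~ (p %| Df x).
Proof.
move=> d_gt1; have p_gt0 := prime_gt0 p_prime.
have pd_gt0 : 0 < p ^ d by rewrite expn_gt0 p_gt0.
have p_pd : p %| p ^ d by rewrite dvdn_exp //; lia.
split=> [perm_pd | [perm_p Df_p]]; last first.
  apply/(is_perm_poly_mod_inj pd_gt0 (taylor_modn _)).
  apply: hensel_inj_mod => //; first lia.
  exact/(is_perm_poly_mod_inj p_gt0 (taylor_modn _)).
split.
  apply/(is_perm_poly_mod_surj p_gt0 (taylor_modn _)) => y.
  have [x fxy] := (is_perm_poly_mod_surj pd_gt0 (taylor_modn _)).1 perm_pd y.
  by exists x; apply: mod_dvdW fxy.
have inj_pd := (is_perm_poly_mod_inj pd_gt0 (taylor_modn _)).1 perm_pd.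
move=> x; apply/negP => /dvdnP [c Dfx].
(* Otherwise x and x + p^(d-1) collide mod p^d. *)
set h := p ^ d.-1.
have h_gt0 : 0 < h by rewrite expn_gt0 p_gt0.
have h_lt : h < p ^ d by rewrite ltn_exp2l ?prime_gt1 //; lia.
have : x + h = x %[mod p ^ d].
  apply: inj_pd.
  rewrite (mod_dvdW _ (f_taylor x h)); last by rewrite -expnM dvdn_exp2l //; lia.
  by rewrite Dfx mulnCA /h -expnSr prednK 1?ltnW // addnC modnMDl.
rewrite -{2}[x]addn0 => /eqP; rewrite eqn_modDl mod0n modn_small //.
by move/eqP => h0; move: h_gt0; rewrite h0.
Qed.

End HenselLifting.

Section PolynomialOfCoefficients.

Local Open Scope ring_scope.

Variables (R : nzRingType) (n : nat).

Definition poly_of_coefs (b : {ffun 'I_n.+1 -> R}) : {poly R} :=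
  \poly_(i < n.+1) b (inord i).

Definition coefs_of_poly (P : {poly R}) : {ffun 'I_n.+1 -> R} :=
  [ffun i : 'I_n.+1 => P`_i].

Lemma poly_of_coefsK : cancel poly_of_coefs coefs_of_poly.
Proof. by move=> b; apply/ffunP => i; rewrite ffunE coef_poly ltn_ord inord_val. Qed.

Lemma coefs_of_polyK (P : {poly R}) :
  (size P <= n.+1)%N -> poly_of_coefs (coefs_of_poly P) = P.
Proof.
move=> sizeP; apply/polyP => i; rewrite coef_poly.
case: ltnP => [i_lt | i_ge]; first by rewrite ffunE inordK.
by rewrite nth_default // (leq_trans sizeP).
Qed.

Lemma poly_of_coefsB : {morph poly_of_coefs : b c / b - c}.
Proof.
move=> b c; apply/polyP => i; rewrite coefB !coef_poly.
by case: ifP => _; rewrite ?ffunE ?subr0.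
Qed.

End PolynomialOfCoefficients.

Section CoefficientVectors.

Variables (n M : nat).
Implicit Types (a : {ffun 'I_n.+1 -> 'I_M}) (x : nat).

Definition coef_deriv_eval a x : nat := \sum_(k < n.+1) a k * k * x ^ k.-1.

Lemma coef_eval_taylor a x h :
  coef_eval a (x + h) = coef_eval a x + h * coef_deriv_eval a x %[mod h ^ 2].
Proof.
rewrite /coef_eval /coef_deriv_eval big_distrr -big_split /=.
rewrite -modn_summ -[RHS]modn_summ; congr (_ %% _); apply: eq_bigr => k _.
rewrite -modnMmr expnD_taylor modnMmr; congr (_ %% _).
by rewrite mulnDr [h * _]mulnC !mulnA.
Qed.

Local Open Scope ring_scope.

Definition coefs_in (R : nzRingType) a : {ffun 'I_n.+1 -> R} :=
  [ffun i => (a i : nat)%:R].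

Lemma coef_eval_natr (R : comNzRingType) a x :
  (coef_eval a x)%:R = (poly_of_coefs (coefs_in R a)).[x%:R].
Proof.
rewrite horner_poly /coef_eval natr_sum; apply: eq_bigr => i _.
by rewrite inord_val ffunE natrM natrX.
Qed.

Lemma coef_deriv_eval_natr (R : comNzRingType) a x :
  (coef_deriv_eval a x)%:R = (poly_of_coefs (coefs_in R a))^`().[x%:R].
Proof.
rewrite /coef_deriv_eval natr_sum /poly_of_coefs poly_def raddf_sum horner_sum.
apply: eq_bigr => i _.
rewrite /= derivZ derivXn hornerZ hornerMn hornerXn inord_val ffunE !natrM natrX.
by rewrite -mulrA; congr (_ * _); rewrite mulr_natl.
Qed.

End CoefficientVectors.

Arguments coefs_in {n M} R a.

Section ReductionModPrime.

Variables (p n M : nat) (a : {ffun 'I_n.+1 -> 'I_M}).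
Hypothesis p_prime : prime p.

Local Notation P := (poly_of_coefs (coefs_in 'F_p a)).
Local Open Scope ring_scope.

Lemma is_perm_poly_mod_Fp : is_perm_poly_mod p (coef_eval a) <-> injective (horner P).
Proof.
rewrite (is_perm_poly_mod_inj (prime_gt0 p_prime) (taylor_modn (coef_eval_taylor a) p)).
split=> [inj_f u v Puv | inj_P x y fxy].
  rewrite -[u]natr_Zp -[v]natr_Zp; apply/eqP; rewrite eqFp_nat //; apply/eqP.
  by apply: inj_f; apply/eqP; rewrite -eqFp_nat // !coef_eval_natr !natr_Zp Puv.
apply/eqP; rewrite -eqFp_nat //; apply/eqP; apply: inj_P.
by rewrite -!coef_eval_natr; apply/eqP; rewrite eqFp_nat //; apply/eqP.
Qed.

Lemma dvdn_coef_deriv_eval x : (p %| coef_deriv_eval a x)%N = (P^`().[x%:R] == 0).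
Proof. by rewrite -coef_deriv_eval_natr (dvdn_pcharf (pchar_Fp p_prime)). Qed.

Lemma is_perm_poly_mod_prime_pow_Fp d : (1 < d)%N ->
  is_perm_poly_mod (p ^ d) (coef_eval a) <->
  injective (horner P) /\ forall z, P^`().[z] != 0.
Proof.
move=> d_gt1; rewrite (is_perm_poly_mod_prime_pow (coef_eval_taylor a) p_prime d_gt1).
rewrite is_perm_poly_mod_Fp; split=> -[inj_P D_P]; split=> //.
  by move=> z; rewrite -[z]natr_Zp -dvdn_coef_deriv_eval.
by move=> x; rewrite dvdn_coef_deriv_eval.
Qed.

End ReductionModPrime.

Section DoubleRoots.

Local Open Scope ring_scope.

Lemma poly_eq0_double_roots (F : fieldType) (s : seq F) (R : {poly F}) :
  uniq s -> (size R <= 2 * size s)%N -> all (root R) s -> all (root R^`()) s -> R = 0.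
Proof.
move=> s_uniq sizeR R_s R'_s; set G := \prod_(z <- s) ('X - z%:P).
have G_dvd Q : all (root Q) s -> G %| Q.
  by move/uniq_roots_dvdp; apply; rewrite uniq_rootsE.
have [Q RE] : exists Q, R = Q * G by apply/dvdpP; exact: G_dvd.
(* G is separable and divides R' = Q' G + Q G', hence G divides Q. *)
have [Q2 QE] : exists Q2, Q = Q2 * G.
  apply/dvdpP.
  have coGG' : coprimep G G^`().
    by move: (separable_prod_XsubC s); rewrite unlock s_uniq => ->.
  rewrite -(Gauss_dvdpl _ coGG') -(dvdp_addr _ (dvdp_mull Q^`() (dvdpp G))).
  by rewrite -derivM -RE G_dvd.
have G_neq0 : G != 0 by rewrite monic_neq0 ?monic_prod_XsubC.
apply: contraTeq sizeR => R_neq0; rewrite -ltnNge RE QE.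
have Q2_neq0 : Q2 != 0 by apply: contraNneq R_neq0; rewrite RE QE => ->; rewrite !mul0r.
rewrite !size_mul ?mulf_neq0 // size_prod_XsubC.
by rewrite -size_poly_gt0 in Q2_neq0; move: (size Q2) (size s) Q2_neq0 => q m; lia.
Qed.

End DoubleRoots.

(* finZmodType instances for finite functions and pairs, not declared by the library. *)
HB.instance Definition _ (aT : finType) (V : finZmodType) := GRing.Zmodule.on {ffun aT -> V}.
HB.instance Definition _ (U V : finZmodType) := GRing.Zmodule.on (U * V)%type.

Section AdditiveFibres.

Local Open Scope ring_scope.

Variables (U V : finZmodType) (f : U -> V).
Hypothesis fB : {morph f : x y / x - y}.
Hypothesis f_surj : forall y, exists x, f x = y.

Lemma card_additive_fibre y : (#|V| * #|[set x | f x == y]|)%N = #|U|.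
Proof.
have f0 : f 0 = 0 by rewrite -(subrr 0) fB subrr.
have fN x : f (- x) = - f x by rewrite -sub0r fB f0 sub0r.
have fD x x' : f (x + x') = f x + f x' by rewrite -[in LHS](opprK x') fB fN opprK.
have fibre_ker y' : #|[set x | f x == y']| = #|[set x | f x == 0]|.
  have [x0 <-] := f_surj y'; rewrite -[RHS](card_imset _ (addrI x0)).
  apply: eq_card => x; rewrite inE; apply/eqP/imsetP => [fx | [k]].
    by exists (x - x0); rewrite ?inE ?fB ?fx ?subrr // addrC subrK.
  by rewrite inE => /eqP fk ->; rewrite fD fk addr0.
rewrite fibre_ker -cardsT mulnC.
have := card_preimset_uniform (Q := predT) (fun j _ => fibre_ker j).
by rewrite cardsT [in LHS]cardsE mulnC => <-; apply: eq_card => x; rewrite !inE.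
Qed.

End AdditiveFibres.

Section EvaluationPairs.

Local Open Scope ring_scope.

Variable F : finFieldType.
Implicit Types P Q : {poly F}.

Definition eval_pair P : {ffun F -> F} * {ffun F -> F} :=
  ([ffun z => P.[z]], [ffun z => P^`().[z]]).

Definition perm_deriv_pairs : {set {ffun F -> F} * {ffun F -> F}} :=
  [set uv : {ffun F -> F} * {ffun F -> F} | injectiveb uv.1 && [forall z, uv.2 z != 0]].

Lemma eval_pair_perm_derivP P :
  reflect (injective (horner P) /\ forall z, P^`().[z] != 0)
          (eval_pair P \in perm_deriv_pairs).
Proof.
rewrite inE /=; apply: (iffP andP) => -[inj_P D_P].
  split=> [u v | z]; last by move/forallP/(_ z): D_P; rewrite ffunE.
  by move/injectiveP/(_ u v): inj_P; rewrite !ffunE.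
split; first by apply/injectiveP => u v; rewrite !ffunE; apply: inj_P.
by apply/forallP => z; rewrite ffunE.
Qed.

Lemma card_perm_deriv_pairs : #|perm_deriv_pairs| = (#|F|`! * #|F|.-1 ^ #|F|)%N.
Proof.
have -> : perm_deriv_pairs = setX [set u : {ffun F -> F} | injectiveb u]
                                  [set v : {ffun F -> F} in ffun_on (predC1 0)].
  by apply/setP => -[u v]; rewrite !inE.
by rewrite cardsX card_inj_ffuns cardsE card_ffun_on cardC1 ffactnn.
Qed.

Lemma eval_pairB : {morph eval_pair : P Q / P - Q}.
Proof.
by move=> P Q; congr (_, _); apply/ffunP => z; rewrite !ffunE ?derivB hornerD hornerN.
Qed.

Lemma eval_pair_inj_small :
  {in [pred P : {poly F} | size P <= 2 * #|F|]%N &, injective eval_pair}.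
Proof.
move=> P Q; rewrite !inE => sizeP sizeQ ePQ; apply/eqP; rewrite -subr_eq0; apply/eqP.
have [/ffunP e0 /ffunP e1] : eval_pair (P - Q) = 0 by rewrite eval_pairB ePQ subrr.
apply: (poly_eq0_double_roots (enum_uniq F)).
- by rewrite -cardE (leq_trans (size_polyD _ _)) // size_polyN geq_max sizeP sizeQ.
- by apply/allP => z _; apply/eqP; have := e0 z; rewrite !ffunE.
by apply/allP => z _; apply/eqP; have := e1 z; rewrite !ffunE.
Qed.

Lemma eval_pair_coefs_surj n : (2 * #|F| <= n.+1)%N ->
  forall j, exists b : {ffun 'I_n.+1 -> F}, eval_pair (poly_of_coefs b) = j.
Proof.
move=> n_ge j; pose m := (2 * #|F|).-1.
have mE : m.+1 = (2 * #|F|)%N by rewrite prednK // muln_gt0 (ltnW (card_finNzRing_gt1 F)).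
have inj_m : injective (fun l : {ffun 'I_m.+1 -> F} => eval_pair (poly_of_coefs l)).
  move=> l1 l2 /eval_pair_inj_small; rewrite !inE -mE !size_poly => /(_ isT isT).
  by move/(congr1 (coefs_of_poly m)); rewrite !poly_of_coefsK.
(* Vectors of length 2 #|F| are exactly as many as pairs of value tables. *)
have /codomP [l ->] :
    j \in codom (fun l : {ffun 'I_m.+1 -> F} => eval_pair (poly_of_coefs l)).
  apply: (inj_card_onto inj_m).
  by rewrite card_prod !card_ffun card_ord mE -expnD addnn mul2n.
exists (coefs_of_poly n (poly_of_coefs l)); rewrite coefs_of_polyK //.
by rewrite (leq_trans (size_poly _ _)) // mE.
Qed.

Lemma card_eval_pair_fibre n j : (2 * #|F| <= n.+1)%N ->
  #|[set b : {ffun 'I_n.+1 -> F} | eval_pair (poly_of_coefs b) == j]| =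
  (#|F| ^ (n.+1 - 2 * #|F|))%N.
Proof.
move=> n_ge.
have evalB : {morph (fun b : {ffun 'I_n.+1 -> F} => eval_pair (poly_of_coefs b)) :
               b c / b - c} by move=> b c /=; rewrite poly_of_coefsB eval_pairB.
have := card_additive_fibre evalB (eval_pair_coefs_surj n_ge) j.
rewrite card_prod !card_ffun !card_ord -expnD addnn -mul2n.
have -> : (#|F| ^ n.+1 = #|F| ^ (2 * #|F|) * #|F| ^ (n.+1 - 2 * #|F|))%N.
  by rewrite -expnD subnKC.
by move/eqP; rewrite eqn_pmul2l ?expn_gt0 ?(ltnW (card_finNzRing_gt1 F)) // => /eqP.
Qed.

End EvaluationPairs.

Lemma card_coefs_in_Fp_fibre p n M (b : {ffun 'I_n.+1 -> 'F_p}) : prime p -> p %| M ->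
  #|[set a : {ffun 'I_n.+1 -> 'I_M} | coefs_in 'F_p a == b]| = (M %/ p) ^ n.+1.
Proof.
move=> p_prime p_M.
pose A i := [pred x : 'I_M | ((x : nat)%:R == b i)%R].
have -> : #|[set a : {ffun 'I_n.+1 -> 'I_M} | coefs_in 'F_p a == b]| = #|family A|.
  apply: eq_card => a; rewrite inE; apply/eqP/familyP => [ab i | Aa].
    by rewrite /A inE -ab ffunE.
  by apply/ffunP => i; rewrite ffunE; apply/eqP; have := Aa i; rewrite /A inE.
have cardA i : #|A i| = M %/ p.
  rewrite -(@card_residue_class M p (val (b i) %% p) p_M) ?ltn_pmod ?prime_gt0 //.
  by apply: eq_card => x; rewrite !inE -{1}[b i]natr_Zp eqFp_nat.
rewrite card_family /image_mem (eq_map cardA) -[in RHS](card_ord n.+1) cardE.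
by elim: (enum _) => //= i s ->; rewrite expnS.
Qed.

Lemma N_pp_prime_pow p d n : prime p -> 1 < d -> 2 * p <= n.+1 ->
  N_pp n (p ^ d) = p`! * p.-1 ^ p * p ^ (n.+1 - 2 * p) * (p ^ d.-1) ^ n.+1.
Proof.
move=> p_prime d_gt1 n_ge.
have card_Fp_p : #|'F_p| = p := card_Fp p_prime.
pose S := perm_deriv_pairs 'F_p.
have card_S : #|S| = p`! * p.-1 ^ p by rewrite card_perm_deriv_pairs card_Fp_p.
have perm_S a : is_perm_poly_mod (p ^ d) (coef_eval a) =
                (eval_pair (poly_of_coefs (coefs_in 'F_p a)) \in S).
  by apply/idP/eval_pair_perm_derivP => /(is_perm_poly_mod_prime_pow_Fp a p_prime d_gt1).
clearbody S.
have -> : N_pp n (p ^ d) =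
    #|[set a : {ffun 'I_n.+1 -> 'I_(p ^ d)} |
       coefs_in 'F_p a \in
         [set b : {ffun 'I_n.+1 -> 'F_p} | eval_pair (poly_of_coefs b) \in S]]|.
  by apply: eq_card => a; rewrite !inE perm_S.
rewrite (card_preimset_uniform (c := (p ^ d %/ p) ^ n.+1)) => [|b _]; last first.
  by apply: card_coefs_in_Fp_fibre; rewrite // dvdn_exp //; lia.
rewrite (card_preimset_uniform (c := p ^ (n.+1 - 2 * p))) => [|j _]; last first.
  by have := @card_eval_pair_fibre 'F_p n j; rewrite card_Fp_p; apply.
have -> : p ^ d %/ p = p ^ d.-1.
  by rewrite -{1}(prednK (ltnW d_gt1)) expnS mulKn // prime_gt0.
by rewrite card_S -mulnA.
Qed.

Theorem mainTheorem13 (p d n : nat) :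
  prime p -> (2 <= d)%N -> (2 * p - 1 <= n)%N ->
  N_p n (p ^ d) = p ^ (d * n.+1) /\
  ((N_pp n (p ^ d))%:R / (N_p n (p ^ d))%:R : rat)%R
    = (((p - 1) ^ p * (p - 1)`!)%:R / (p ^ (2 * p - 1))%:R)%R.
Proof.
move=> p_prime d_gt1 n_ge; have p_gt0 := prime_gt0 p_prime.
have N_pE : N_p n (p ^ d) = p ^ (d * n.+1) by rewrite /N_p card_ffun !card_ord -expnM mulnC.
split=> //.
have cross : N_pp n (p ^ d) * p ^ (2 * p - 1) = (p - 1) ^ p * (p - 1)`! * N_p n (p ^ d).
  have pE : p ^ (d * n.+1) = p * p ^ (n.+1 - 2 * p) * p ^ (2 * p - 1) * (p ^ d.-1) ^ n.+1.
    rewrite -expnS -expnM -!expnD; congr (_ ^ _).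
    by rewrite -{1}(prednK (ltnW d_gt1)) mulSn; lia.
  rewrite N_pp_prime_pow // ?N_pE ?pE; last by lia.
  rewrite -[in p`!](prednK p_gt0) factS prednK // !subn1.
  by move: (p ^ _) (p ^ _) ((p ^ _) ^ _) (p.-1 ^ p) (p.-1)`! => X Y Z A B; nia.
apply/eqP; rewrite eqr_div ?Num.Theory.pnatr_eq0 -?lt0n ?N_pE ?expn_gt0 ?p_gt0 //.
by rewrite -!natrM Num.Theory.eqr_nat cross N_pE.
Qed.
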